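(* Let $n\ge 2$ and let $v_1,\ldots,v_n$ be positive integers with $\gcd(v_1,\ldots,v_n)=1$. Then every local maximum of the function $f(t)=\min_{1\le i\le n}\Vert t v_i\Vert$ on $\mathbb{R}$ occurs at a time of the form $t_0=\frac{m}{v_i+v_j}$, where $1\le i<j\le n$ and $m$ is an integer.
   Context: For a real number $x$, $\Vert x\Vert$ denotes the distance from $x$ to the nearest integer. *)

From HB Require Import structures.
From mathcomp Require Import all_boot all_order all_algebra.
From mathcomp Require Import reals.
Set Implicit Arguments. Unset Strict Implicit. Unset Printing Implicit Defensive.
Import Order.TTheory GRing.Theory Num.Theory.
Local Open Scope ring_scope.

(* ||x|| : distance from x to the nearest integer.  The nearest integer is
   either floor x or floor x + 1. *)
Definition dist_int (R : realType) (x : R) : R :=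
  Num.min (x - (Num.floor x)%:~R) ((Num.floor x)%:~R + 1 - x).

(* f(t) = min_{i < n} || t v_i ||.  The neutral element 1 is irrelevant for
   n >= 1, since every || . || is <= 1/2. *)
Definition fmin (R : realType) (n : nat) (v : 'I_n -> nat) (t : R) : R :=
  \big[Num.min/1]_(i < n) dist_int (t * (v i)%:R).

Definition local_max (R : realType) (g : R -> R) (t : R) : Prop :=
  exists2 e : R, 0 < e & forall s : R, `|s - t| < e -> g s <= g t.

From HB Require Import structures.
From mathcomp Require Import all_boot all_order all_algebra.
From mathcomp Require Import reals.
From mathcomp Require Import lra zify ring.
From Stdlib Require Import Classical.
Import Order.TTheory GRing.Theory Num.Theory.
Local Open Scope ring_scope.

(* Let c = f(t).  If every index i attaining the minimum had its nearest
   integer on the same side of t v_i (t v_i - m_i = c for all of them, or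
   = -c for all of them), a small move of t in that direction would increase
   all these distances while keeping the other ones above c, so t would not
   be a local maximum.  Hence some active i, j satisfy t v_i = m_i + c and
   t v_j = m_j - c, so t (v_i + v_j) is an integer, and i <> j because
   0 < c < 1/2.  When c = 1/2 every t v_i is a half-integer, so any two
   indices work. *)

Section DistInt.
Context {R : realType}.
Implicit Types (x y a c : R) (m : int).

Lemma intr_dist_ge1 [m m'] : m != m' -> 1 <= `|m%:~R - m'%:~R : R|.
Proof. by move=> neq_mm'; rewrite -intrB -intr_norm ler1z; lia. Qed.

Lemma dist_int_le x m : dist_int x <= `|x - m%:~R|.
Proof.
rewrite /dist_int; have /andP[fl_le lt_fl] := floor_itv x.
set k := Num.floor x in fl_le lt_fl *; rewrite intrD in lt_fl.
have [m_le|k_lt] := lerP m k.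
- have : (m%:~R : R) <= k%:~R by rewrite ler_int.
  by move=> ?; rewrite ger0_norm ?ge_min; [apply/orP; left|]; lra.
- have : ((k + 1)%:~R : R) <= m%:~R by rewrite ler_int; lia.
  by rewrite intrD => ?; rewrite ltr0_norm ?ge_min; [apply/orP; right|]; lra.
Qed.

Lemma dist_int_attained x : exists m, dist_int x = `|x - m%:~R|.
Proof.
rewrite /dist_int; have /andP[fl_le lt_fl] := floor_itv x.
set k := Num.floor x in fl_le lt_fl *; rewrite intrD in lt_fl.
rewrite minEle; case: ifP => _.
- by exists k; rewrite ger0_norm //; lra.
- by exists (k + 1); rewrite intrD ltr0_norm; [ring | lra].
Qed.

Lemma dist_int_ge0 x : 0 <= dist_int x.
Proof. by have [m ->] := dist_int_attained x. Qed.

Lemma dist_int_le_half x : dist_int x <= 1/2.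
Proof.
rewrite /dist_int ge_min.
by case: (lerP (x - (Num.floor x)%:~R) (1/2)) => ?; apply/orP; [left|right]; lra.
Qed.

Lemma dist_int_lipschitz x y : dist_int y <= dist_int x + `|y - x|.
Proof.
have [m dxE] := dist_int_attained x; apply: le_trans (dist_int_le y m) _.
have := ler_normD (y - x) (x - m%:~R).
by rewrite dxE (_ : y - x + _ = y - m%:~R); [lra | ring].
Qed.

Lemma dist_int_half [x] : dist_int x = 1/2 -> exists m, x = m%:~R + 1/2.
Proof.
have [m ->] := dist_int_attained x; move/eqP; rewrite eqr_norml => /andP[/orP[] /eqP dx _].
- by exists m; lra.
- by exists (m - 1); rewrite intrB; lra.
Qed.

Lemma dist_int_gt x m a c :
  `|x - m%:~R| = a -> c < a -> a < 1 - c -> c < dist_int x.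
Proof.
move=> dxm c_lt_a a_lt; have [m' ->] := dist_int_attained x.
have [<- | neq_mm'] := eqVneq m m'; first by rewrite dxm.
have := intr_dist_ge1 neq_mm'; have := ler_normB (x - m'%:~R) (x - m%:~R).
by rewrite (_ : x - m'%:~R - _ = m%:~R - m'%:~R); [lra | ring].
Qed.

End DistInt.

Section Fmin.
Context {R : realType} {n : nat} {v : 'I_n -> nat}.
Hypothesis v_gt0 : forall i, (0 < v i)%N.

Lemma fmin_le (t : R) i : fmin v t <= dist_int (t * (v i)%:R).
Proof. exact: bigmin_le. Qed.

Lemma fmin_ge0 (t : R) : 0 <= fmin v t.
Proof. by apply: le_bigmin => // i _; apply: dist_int_ge0. Qed.

Lemma exists_small_step [w : 'I_n -> R] [e : R] :
  0 < e -> (forall i, 0 < w i) ->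
  exists2 d, 0 < d < e & forall i, d * (v i)%:R < w i.
Proof.
move=> e_gt0 w_gt0.
pose mu := \big[Num.min/1]_(i < n) (w i / ((v i)%:R + 1)).
have vS_gt0 i : (0 : R) < (v i)%:R + 1 by have := ler0n R (v i); lra.
have mu_gt0 : 0 < mu by apply: lt_bigmin => // i _; rewrite divr_gt0.
have mu_le i : mu * ((v i)%:R + 1) <= w i.
  by rewrite -ler_pdivlMr //; apply: bigmin_le.
have d_le_e : Num.min e mu <= e by rewrite ge_min lexx.
have d_le_mu : Num.min e mu <= mu by rewrite ge_min lexx orbT.
have d_gt0 : 0 < Num.min e mu by rewrite lt_min e_gt0.
exists (Num.min e mu / 2); first by apply/andP; split; lra.
move=> i; have := mu_le i; have := ler0n R (v i); have := w_gt0 i.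
move: (Num.min e mu) d_le_mu d_gt0 => d; nra.
Qed.

Lemma one_sided_not_local_max (t sg : R) :
  sg = 1 \/ sg = -1 -> fmin v t < 1/2 ->
  (forall i, dist_int (t * (v i)%:R) = fmin v t ->
     exists m : int, t * (v i)%:R - m%:~R = sg * fmin v t) ->
  ~ local_max (fmin v) t.
Proof.
move=> sg_pm1 c_lt offset [e e_gt0 t_max]; set c := fmin v t in c_lt offset t_max.
have norm_sg y : 0 <= y -> `|sg * y| = y.
  by move=> y_ge0; case: sg_pm1 => ->; rewrite ?mulN1r ?normrN ?mul1r ger0_norm.
(* Admissible displacement of t v_i: an inactive index may lose its slack over c,
   an active one must keep the same nearest integer. *)
pose w i := let x := dist_int (t * (v i)%:R) in if c < x then x - c else 1 - 2 * c.
have w_gt0 i : 0 < w i by rewrite /w; case: ifP => ?; lra.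
have [d /andP[d_gt0 d_lt_e] dv_lt_w] := exists_small_step e_gt0 w_gt0.
suff c_lt_s : c < fmin v (t + sg * d).
  have : `|t + sg * d - t| < e by rewrite addrAC subrr add0r (norm_sg _ (ltW d_gt0)).
  by move/t_max; rewrite leNgt c_lt_s.
apply: lt_bigmin => [|i _]; first lra.
have dv_gt0 : 0 < d * (v i)%:R by rewrite mulr_gt0 // ltr0n.
rewrite (_ : (t + sg * d) * (v i)%:R = t * (v i)%:R + sg * (d * (v i)%:R)); last ring.
have := dv_lt_w i; rewrite /w; case: ifP => [inactive | /negbT active] dv_lt.
- have := dist_int_lipschitz (t * (v i)%:R + sg * (d * (v i)%:R)) (t * (v i)%:R).
  by rewrite opprD addrA subrr add0r normrN (norm_sg _ (ltW dv_gt0)); lra.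
- have [|m dm] := offset i; first by apply/eqP; rewrite eq_le leNgt active fmin_le.
  apply: (dist_int_gt _ m (c + d * (v i)%:R)); [|lra|lra].
  by rewrite addrAC dm -mulrDr norm_sg //; have c_ge0 : 0 <= c := fmin_ge0 t; lra.
Qed.

Lemma local_max_fmin_gt0 [t : R] : local_max (fmin v) t -> 0 < fmin v t.
Proof.
move=> t_max; rewrite lt_neqAle fmin_ge0 andbT; apply/negP => /eqP c0.
apply: (@one_sided_not_local_max t 1) t_max; [by left | by rewrite -c0; lra |].
move=> i dt; have [m dm] := dist_int_attained (t * (v i)%:R); exists m.
by apply/eqP; rewrite -c0 mulr0 -normr_eq0 -dm dt -c0.
Qed.

Lemma local_max_opposite_offsets [t : R] :
  local_max (fmin v) t -> fmin v t < 1/2 ->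
  exists i j (mi mj : int),
    t * (v i)%:R - mi%:~R = fmin v t /\ t * (v j)%:R - mj%:~R = - fmin v t.
Proof.
move=> t_max c_lt; apply: NNPP => no_pair.
have offset i : dist_int (t * (v i)%:R) = fmin v t -> exists m : int,
    t * (v i)%:R - m%:~R = fmin v t \/ t * (v i)%:R - m%:~R = - fmin v t.
  have [m -> /eqP] := dist_int_attained (t * (v i)%:R).
  by rewrite eqr_norml => /andP[/orP[] /eqP ? _]; exists m; [left | right].
have [[i0 [m0 dm0]] | no_pos] :=
  classic (exists i (m : int), t * (v i)%:R - m%:~R = fmin v t).
- apply: (@one_sided_not_local_max t 1) t_max => //; first by left.
  move=> i /offset [m [pos | neg]]; exists m; rewrite mul1r //.
  by case: no_pair; exists i0, i, m0, m.
- apply: (@one_sided_not_local_max t (-1)) t_max => //; first by right.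
  move=> i /offset [m [pos | neg]]; exists m; rewrite mulN1r //.
  by case: no_pos; exists i, m.
Qed.

Lemma pair_sum_intr [t : R] [i j : 'I_n] [m : int] :
  i != j -> t * (v i)%:R + t * (v j)%:R = m%:~R ->
  exists i j : 'I_n, (i < j)%N /\ exists m : int, t = m%:~R / (v i + v j)%:R.
Proof.
move=> neq_ij sum_int.
wlog lt_ij : i j neq_ij sum_int / (i < j)%N => [wlog_lt|].
  have [|gt_ij|eq_ij] := ltngtP i j; first exact: wlog_lt.
  - by apply: (wlog_lt j i); rewrite 1?eq_sym 1?addrC.
  - by move/val_inj: eq_ij neq_ij => ->; rewrite eqxx.
exists i, j; split => //; exists m.
by rewrite -sum_int -mulrDr -natrD mulfK // pnatr_eq0 addn_eq0 negb_and -!lt0n !v_gt0.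
Qed.

End Fmin.

Theorem proposition4p1 (R : realType) (n : nat) (v : 'I_n -> nat)
  (hn : (2 <= n)%N) (hpos : forall i, (0 < v i)%N)
  (hgcd : \big[gcdn/0%N]_(i < n) v i = 1%N) (t : R) :
  local_max (fmin v) t ->
  exists i j : 'I_n, (i < j)%N /\
    exists m : int, t = m%:~R / (v i + v j)%:R.
Proof.
move=> t_max; pose i0 : 'I_n := Ordinal (ltnW hn); pose i1 : 'I_n := Ordinal hn.
have [c_lt|c_gt|c_half] := ltrgtP (fmin v t) (1/2).
- have c_gt0 := local_max_fmin_gt0 hpos t_max.
  have [i [j [mi [mj [dmi dmj]]]]] := local_max_opposite_offsets hpos t_max c_lt.
  apply: (pair_sum_intr hpos (i := i) (j := j) (m := mi + mj)); last by rewrite intrD; lra.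
  apply/eqP => eq_ij; rewrite -{}eq_ij in dmj.
  have [eq_m|neq_m] := eqVneq mi mj; first by move: c_gt0 dmi dmj; rewrite eq_m; lra.
  have := intr_dist_ge1 (R := R) neq_m.
  by rewrite (_ : _ - _ = - (2 * fmin v t)) ?normrN ?ger0_norm; lra.
- by have := le_trans (fmin_le (v := v) t i0) (dist_int_le_half _); lra.
- have half_at i : dist_int (t * (v i)%:R) = 1/2.
    by apply/eqP; rewrite eq_le dist_int_le_half -c_half fmin_le.
  have [m0 dm0] := dist_int_half (half_at i0).
  have [m1 dm1] := dist_int_half (half_at i1).
  by apply: (pair_sum_intr hpos (i := i0) (j := i1) (m := m0 + m1 + 1)) => //; rewrite !intrD; lra.
Qed.
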